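(* A Burling graph contains no triangle.
   Context: Graphs are finite, without loops or multiple edges. In a rooted tree $T$ with root $r$, each non-root vertex $v$ has a parent $p(v)$; children, leaves, ancestors and descendants are as usual. A branch is a sequence $v_1\dots v_k$ ($k\ge0$) with $v_i$ the parent of $v_{i+1}$; it starts at $v_1$. A Burling tree is a 4-tuple $(T,r,\ell,c)$: $T$ a rooted tree with root $r$; $\ell$ assigns to each non-leaf vertex $v$ one of its children $\ell(v)$ (the last-born of $v$); $c$ assigns to every vertex $v$ that is neither the root nor a last-born the vertex-set of a (possibly empty) branch starting at $\ell(p(v))$, and $c(v)=\emptyset$ if $v$ is the root or a last-born. The oriented graph fully derived from it has vertex-set $V(T)$ and an arc $uv$ iff $v\in c(u)$. A (non-oriented) graph is a Burling graph if it is isomorphic to an induced subgraph of the underlying graph of the oriented graph fully derived from some Burling tree. A triangle is a set of three pairwise adjacent vertices. *)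

From mathcomp Require Import all_boot.
Set Implicit Arguments. Unset Strict Implicit. Unset Printing Implicit Defensive.

(* A rooted tree on a finite vertex type V with root r is given by a parent
   map p : V -> V; by convention p r = r, and every vertex reaches the root
   by iterating p (this forces acyclicity). *)
Definition rooted_tree (V : finType) (r : V) (p : V -> V) : Prop :=
  p r = r /\ forall v : V, exists k, iter k p v = r.

Definition is_child (V : finType) (r : V) (p : V -> V) (x y : V) : bool :=
  (y != r) && (p y == x).

Definition branch_set_from (V : finType) (r : V) (p : V -> V) (a : V)
    (B : {set V}) : Prop :=
  B = set0 \/
  exists s : seq V, path (is_child r p) a s /\ B = [set x in a :: s].

Definition burling_tree (V : finType) (r : V) (p : V -> V) (l : V -> V)
    (c : V -> {set V}) : Prop :=
  rooted_tree r p /\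
  (forall v : V, (exists u, is_child r p v u) -> is_child r p v (l v)) /\
  (forall v : V,
     if (v == r) || (l (p v) == v) then c v = set0
     else branch_set_from r p (l (p v)) (c v)).

(* Underlying (non-oriented) adjacency of the oriented graph fully derived
   from a Burling tree: arc uv iff v \in c u. *)
Definition derived_adj (V : finType) (c : V -> {set V}) (u v : V) : bool :=
  (v \in c u) || (u \in c v).

Definition burling_graph (G : finType) (e : rel G) : Prop :=
  exists (V : finType) (r : V) (p l : V -> V) (c : V -> {set V}),
    burling_tree r p l c /\
    exists f : G -> V, injective f /\
      forall x y : G, e x y = derived_adj c (f x) (f y).

Definition has_triangle (G : finType) (e : rel G) : Prop :=
  exists x y z : G, [&& e x y, e y z & e x z].

From mathcomp Require Import all_boot zify.
Set Implicit Arguments. Unset Strict Implicit. Unset Printing Implicit Defensive.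

(* Fix a depth function d with d v = d (p v) + 1 off the root. An arc u -> v
   means that v lies on a branch starting at the last-born sibling l (p u) of u,
   so going up from v to depth d u lands on l (p u), never on u itself. In a
   transitive triangle u -> v -> w, u -> w the vertices v and w lie on that one
   branch, so going up from w to depth d v lands on v, contradicting v -> w. In
   a directed 3-cycle u -> v -> w -> u all depths coincide, so v = l (p u) is a
   last-born, which a tail of an arc never is. *)

Lemma rooted_tree_depth (V : finType) (r : V) (p : V -> V) :
  rooted_tree r p -> exists d : V -> nat, forall v, v != r -> d v = (d (p v)).+1.
Proof.
case=> _ reach.
have reach_b v : exists k, iter k p v == r.
  by have [k /eqP] := reach v; exists k.
exists (fun v => ex_minn (reach_b v)) => v vNr.
case: ex_minnP => m pm m_min; case: ex_minnP => n pn n_min.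
apply/eqP; rewrite eqn_leq; apply/andP; split.
- by apply: m_min; rewrite iterSr.
- case: m pm m_min => [/= /eqP vr|m pm _]; first by rewrite vr eqxx in vNr.
  by apply: n_min; rewrite -iterSr.
Qed.

Section Branches.

Variables (V : finType) (r : V) (p : V -> V) (d : V -> nat).
Hypothesis d_parent : forall v, v != r -> d v = (d (p v)).+1.

Lemma branch_below_last a s z : path (is_child r p) a s -> z \in a :: s ->
  d a <= d z <= d (last a s) /\ iter (d (last a s) - d z) p (last a s) = z.
Proof.
elim: s a z => [|b s IH] a z /=.
  by rewrite inE => _ /eqP->; rewrite leqnn subnn.
case/andP=> /andP[bNr /eqP pb] b_path.
have db : d b = (d a).+1 by rewrite d_parent // pb.
have [/andP[_ bt] tb] := IH b b b_path (mem_head _ _).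
rewrite in_cons => /orP[/eqP->|z_bs]; last first.
  have [/andP[bz zt] tz] := IH b z b_path z_bs.
  by rewrite zt tz andbT (leq_trans _ bz) // db.
rewrite leqnn (leq_trans _ bt) ?db //.
have -> : d (last b s) - d a = (d (last b s) - d b).+1 by lia.
by rewrite iterS tb pb.
Qed.

Lemma branch_depth_ge a s z : path (is_child r p) a s -> z \in a :: s -> d a <= d z.
Proof. by move=> a_path /(branch_below_last a_path) [/andP[]]. Qed.

Lemma branch_chain a s y z : path (is_child r p) a s ->
  y \in a :: s -> z \in a :: s -> d y <= d z -> iter (d z - d y) p z = y.
Proof.
move=> a_path /(branch_below_last a_path) [/andP[_ yt] ty].
move=> /(branch_below_last a_path) [/andP[_ zt] tz] yz.
rewrite -{2}tz -iterD -[RHS]ty; congr (iter _ p _); lia.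
Qed.

End Branches.

Section Arcs.

Variables (V : finType) (r : V) (p l : V -> V) (c : V -> {set V}) (d : V -> nat).
Hypothesis d_parent : forall v, v != r -> d v = (d (p v)).+1.
Hypothesis burling : burling_tree r p l c.

Lemma arc_branch u v : v \in c u ->
  [/\ l (p u) != u, p (l (p u)) = p u, d (l (p u)) = d u
    & exists2 s, path (is_child r p) (l (p u)) s & c u = [set x in l (p u) :: s]].
Proof.
have [_ [last_born_child arc_sets]] := burling.
move=> v_cu; have := arc_sets u.
case: ifP => [_ cu0|/norP[uNr lNu] cu_branch]; first by rewrite cu0 inE in v_cu.
have /andP[lNr /eqP pl] : is_child r p (p u) (l (p u)).
  by apply: last_born_child; exists u; rewrite /is_child uNr eqxx.
case: cu_branch => [cu0|[s [l_path cu_s]]]; first by rewrite cu0 inE in v_cu.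
by split=> //; [rewrite d_parent // pl -d_parent | exists s].
Qed.

Lemma arc_ancestor u v : v \in c u -> d u <= d v /\ iter (d v - d u) p v = l (p u).
Proof.
move=> v_cu; have [_ _ dl [s l_path cu_s]] := arc_branch v_cu.
move: v_cu; rewrite cu_s inE => v_s.
have := branch_depth_ge d_parent l_path v_s; rewrite dl => uv.
by split=> //; rewrite -dl (branch_chain d_parent l_path (mem_head _ _) v_s) ?dl.
Qed.

Lemma no_transitive_arc_triangle u v w : v \in c u -> w \in c u -> w \in c v -> False.
Proof.
move=> v_cu w_cu w_cv; have [_ _ _ [s l_path cu_s]] := arc_branch v_cu.
move: v_cu w_cu; rewrite cu_s !inE => v_s w_s.
have [vw wv] := arc_ancestor w_cv; have [lNv _ _ _] := arc_branch w_cv.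
by rewrite -wv (branch_chain d_parent l_path v_s w_s vw) eqxx in lNv.
Qed.

Lemma no_cyclic_arc_triangle u v w : v \in c u -> w \in c v -> u \in c w -> False.
Proof.
move=> v_cu w_cv u_cw.
have [uv lv] := arc_ancestor v_cu; have [vw _] := arc_ancestor w_cv.
have [wu _] := arc_ancestor u_cw.
have [_ pl _ _] := arc_branch v_cu; have [lNv _ _ _] := arc_branch w_cv.
have /eqP duv : d u == d v by rewrite eqn_leq uv (leq_trans vw wu).
move: lv; rewrite duv subnn /= => vl.
by rewrite vl pl eqxx in lNv.
Qed.

Lemma derived_adj_triangle_free x y z :
  derived_adj c x y -> derived_adj c y z -> derived_adj c x z -> False.
Proof.
case/orP=> [xy|yx]; case/orP=> [yz|zy]; case/orP=> [xz|zx].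
- exact: no_transitive_arc_triangle xy xz yz.
- exact: no_cyclic_arc_triangle xy yz zx.
- exact: no_transitive_arc_triangle xz xy zy.
- exact: no_transitive_arc_triangle zx zy xy.
- exact: no_transitive_arc_triangle yx yz xz.
- exact: no_transitive_arc_triangle yz yx zx.
- exact: no_cyclic_arc_triangle xz zy yx.
- exact: no_transitive_arc_triangle zy zx yx.
Qed.

End Arcs.

Theorem lemma3p4 (G : finType) (e : rel G) :
  symmetric e -> irreflexive e -> burling_graph e -> ~ has_triangle e.
Proof.
move=> _ _ [V [r [p [l [c [burling [f [_ e_adj]]]]]]]] [x [y [z]]].
have [d d_parent] := rooted_tree_depth burling.1.
rewrite !e_adj => /and3P[xy yz xz].
exact: derived_adj_triangle_free d_parent burling _ _ _ xy yz xz.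
Qed.
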